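(* Let $p$ be a prime, let $P$ be a finite $p$-group, and let $a\in P$ have order $p$. Assume there exists an elementary abelian subgroup of $P$ which is normalized but not centralized by $a$. Then there is an elementary abelian subgroup $X$ of $P$ of order $p^2$ such that $|a^P\cap X|=p$ and $X\cap P'\neq 1$.
   Context: $a^P$ denotes the conjugacy class of $a$ in $P$, and $P'$ the derived subgroup of $P$. *)

From mathcomp Require Import all_boot all_fingroup all_solvable.

From mathcomp Require Import all_boot all_fingroup all_solvable.

(* Iterating x |-> [a, x] inside E descends the lower central series of the
   nilpotent group P, so it produces x in E with f := [a, x] nontrivial and
   central in <a>; as E is elementary abelian, X := <a> x <f> has order p^2
   and f lies in E :&: P'.  Since a ^ (x ^+ n) = a * f ^+ n, the coset a<f>
   consists of conjugates of a.  Conversely, a conjugate a ^ g in X outside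
   a<f> would make a conjugate of a a power of [a, g], which nilpotency
   forbids because it would put a in every term of the lower central series. *)

Set Implicit Arguments. Unset Strict Implicit.
Local Open Scope group_scope.

Lemma conjg_expg_commute (gT : finGroupType) (a x f : gT) m :
  commute x f -> a ^ x = a * f -> a ^ (x ^+ m) = a * f ^+ m.
Proof.
move=> cxf axf; elim: m => [|m IHm]; first by rewrite !expg0 conjg1 mulg1.
rewrite expgSr conjgM IHm conjMg axf -mulgA expgS; congr (_ * (_ * _)).
by apply/conjg_fixP/commgP/commute_sym/commuteX.
Qed.

Lemma commg_norm_mem (gT : finGroupType) (E : {group gT}) (a x : gT) :
  a \in 'N(E) -> x \in E -> [~ a, x] \in E.
Proof. by move=> nEa Ex; rewrite commgEr groupM ?memJ_norm ?groupV. Qed.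

Section NilpotentGroup.

Variables (gT : finGroupType) (P : {group gT}).

Lemma iter_commg_lcn (a x : gT) n :
  a \in P -> x \in P -> iter n (commg a) x \in 'L_n.+1(P).
Proof.
move=> Pa Px; elim: n => [|n IHn]; first by rewrite lcn1.
by rewrite /= -invg_comm groupV (subsetP (lcnSnS _ _)) ?mem_commg.
Qed.

Hypothesis nilP : nilpotent P.

Lemma nil_iter_commg_eq1 (a x : gT) :
  a \in P -> x \in P -> exists n, iter n (commg a) x = 1.
Proof.
move=> Pa Px; have [n Ln1] := lcnP _ nilP.
by exists n; move: (iter_commg_lcn n Pa Px); rewrite Ln1 => /set1P.
Qed.

Lemma nil_commg_cent_witness (E : {group gT}) (a : gT) :
    E \subset P -> a \in P -> a \in 'N(E) -> a \notin 'C(E) ->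
  exists x, [/\ x \in E, [~ a, x] != 1 & commute a [~ a, x]].
Proof.
move=> sEP Pa nEa; rewrite -sub_cent1 => /subsetPn[x0 Ex0 nx0].
have [n] := nil_iter_commg_eq1 Pa (subsetP sEP _ Ex0).
have : [~ a, x0] != 1.
  by apply: contraNneq nx0 => /eqP/commgP/commute_sym/cent1P.
clear nx0; elim: n x0 Ex0 => [|n IHn] x Ex ntax.
  by move=> /= x1; rewrite x1 commg1 eqxx in ntax.
have Eax := commg_norm_mem nEa Ex.
have [caax | ntaax] := eqVneq [~ a, [~ a, x]] 1.
  by exists x; split=> //; apply/commgP/eqP.
by rewrite iterSr; apply: IHn.
Qed.

Lemma nil_conjg_cycle_commg_eq1 (a g h : gT) :
  a \in P -> g \in P -> h \in P -> a ^ h \in <[[~ a, g]]> -> a = 1.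
Proof.
move=> Pa Pg Ph aJh; have aL n : a \in 'L_n.+1(P).
  elim: n => [|n IHn]; first by rewrite lcn1.
  rewrite -(memJ_norm a (subsetP (lcn_norm _ _) h Ph)).
  apply: subsetP aJh; rewrite cycle_subG (subsetP (lcnSnS _ _)) ?mem_commg //.
have [n Ln1] := lcnP _ nilP.
by move: (aL n); rewrite Ln1 => /set1P.
Qed.

Variables (a x f : gT).
Hypotheses (Pa : a \in P) (Px : x \in P) (pr_a : prime #[a]).
Hypotheses (caf : commute a f) (cxf : commute x f) (axf : a ^ x = a * f).

Lemma class_cycle_mul_cycle : (a ^: P) :&: (<[a]> * <[f]>) = a *: <[f]>.
Proof.
have cfa : <[f]> \subset 'C(<[a]>).
  by rewrite cent_cycle cycle_subG; apply/cent1P.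
apply/setP=> u; rewrite inE mem_lcoset; apply/andP/idP=> [[] | ].
  case/imsetP=> g Pg ->{u} /mulsgP[v w av fw aJg].
  set v' := a^-1 * v; have [v'1 | ntv'] := eqVneq v' 1.
    by rewrite aJg mulgA -/v' v'1 mul1g.
  have av' : v' \in <[a]> by rewrite groupM ?groupV ?cycle_id.
  have : a \in <[v']> by rewrite -(nt_gen_prime pr_a) ?cycle_id // !inE ntv'.
  case/cycleP=> k ak; case/cycleP: (fw) => j wj.
  have agk : [~ a, g] ^+ k = a ^ (x ^+ (j * k)).
    rewrite commgEl aJg mulgA expgMn; last first.
      exact: commute_sym ((centsP cfa) w fw v' av').
    by rewrite -ak wj -expgM (conjg_expg_commute _ cxf axf).
  have := nil_conjg_cycle_commg_eq1 Pa Pg (groupX (j * k) Px).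
  by rewrite -agk mem_cycle => /(_ isT) a1; move: pr_a; rewrite a1 order1.
move=> /cycleP[j aVu].
rewrite -(mulKVg a u) aVu -(conjg_expg_commute _ cxf axf).
split; first by rewrite memJ_class ?groupX.
by rewrite (conjg_expg_commute _ cxf axf) mem_mulg ?cycle_id ?mem_cycle.
Qed.

End NilpotentGroup.

Theorem lemma2p3 (gT : finGroupType) (p : nat) (P : {group gT}) (a : gT) :
  prime p -> (p.-group P)%g -> a \in P -> #[a]%g = p ->
  (exists E : {group gT},
      [/\ (E \subset P)%g, (p.-abelem E)%g, a \in 'N(E)%g & a \notin 'C(E)%g]) ->
  exists X : {group gT},
    [/\ (X \subset P)%g, (p.-abelem X)%g, #|X| = (p ^ 2)%N,
        #|((a ^: P) :&: X)%g| = p & (X :&: P^`(1) != 1)%g].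
Proof.
move=> pr_p pP Pa oa [E [sEP abelE nEa ncEa]].
have nilP := pgroup_nil pP.
have [x [Ex ntf caf]] := nil_commg_cent_witness nilP sEP Pa nEa ncEa.
set f := [~ a, x]; have Ef : f \in E := commg_norm_mem nEa Ex.
have [Px Pf] : x \in P /\ f \in P by rewrite !(subsetP sEP).
have cxf : commute x f := centsP (abelem_abelian abelE) x Ex f Ef.
have axf : a ^ x = a * f by rewrite /f commgEl mulKVg.
have of_p : #[f] = p := abelem_order_p abelE Ef ntf.
have cfa : <[f]> \subset 'C(<[a]>).
  by rewrite cent_cycle cycle_subG; apply/cent1P.
have aE : a \notin E.
  by apply: contra ncEa => Ea; apply: subsetP (abelem_abelian abelE) a Ea.
have tiaf : <[a]> :&: <[f]> = 1.
  apply: prime_TIg; first by rewrite -/#[a] oa.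
  by rewrite cycle_subG; apply: contra aE; apply: subsetP; rewrite cycle_subG.
have defX := dprodEY cfa tiaf.
exists (<[a]> <*> <[f]>)%G; split.
- by rewrite join_subG !cycle_subG Pa.
- by rewrite (dprod_abelem p defX) !cycle_abelem ?pr_p ?orbT ?oa ?of_p ?dvdnn.
- by rewrite -(dprod_card defX) -/#[a] -/#[f] oa of_p mulnn.
- rewrite /= (cent_joinEr cfa) (class_cycle_mul_cycle nilP Pa Px) ?oa //.
  by rewrite card_lcoset.
- apply/trivgPn; exists f => //.
  by rewrite inE mem_gen ?inE ?cycle_id ?orbT //= derg1 mem_commg.
Qed.
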